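(* Let $p\ge0$, $m\ge1$ be integers with $p+\frac m2>1$. Let $\mathbb{H}$ be the minimal operator in $\mathbb{B}_p$ generated by $H^{p,m}=a^{*p}(a^m+a^{*m})a^p$, i.e. the closure of the restriction of $H^{p,m}$ to the polynomials in $\mathbb{B}_p$. Then $\mathbb{H}$ is a closed symmetric operator which is completely indeterminate: its deficiency numbers satisfy $n_+=n_-=m$.
   Context: The Bargmann space $\mathbb{B}$ is the Hilbert space of entire functions with $\|\phi\|^2=\int_{\mathbb{C}}|\phi(z)|^2e^{-|z|^2}dx\,dy<\infty$; $e_k(z)=z^k/\sqrt{k!}$ is an orthonormal basis; $a\phi=\phi'$, $a^*\phi=z\phi$. $\mathbb{B}_p=\{\phi\in\mathbb{B}:\phi(0)=\phi'(0)=\dots=\phi^{(p-1)}(0)=0\}$, the closed span of $\{e_k:k\ge p\}$. In this basis $H^{p,m}e_k=0$ for $k<p$, $H^{p,m}e_k=\frac{\sqrt{k!(k+m)!}}{(k-p)!}e_{k+m}$ for $p\le k<p+m$, and $H^{p,m}e_k=\frac{\sqrt{k!(k-m)!}}{(k-p-m)!}e_{k-m}+\frac{\sqrt{k!(k+m)!}}{(k-p)!}e_{k+m}$ for $k\ge p+m$. For a closed symmetric operator $T$ the deficiency numbers are $n_\pm=\dim\ker(T^*\mp iI)$; $T$ (represented by a block Jacobi matrix with $m\times m$ blocks) is called completely indeterminate if $n_+=n_-=m$. *)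

From Stdlib Require Import Reals Lra Lia Arith.
Open Scope R_scope.

Record C := mkC { re : R ; im : R }.
Definition C0 : C := mkC 0 0.
Definition Cadd (a b : C) : C := mkC (re a + re b) (im a + im b).
Definition Csub (a b : C) : C := mkC (re a - re b) (im a - im b).
Definition Cmul (a b : C) : C :=
  mkC (re a * re b - im a * im b) (re a * im b + im a * re b).
Definition Cconj (a : C) : C := mkC (re a) (- im a).
Definition Cnorm2 (a : C) : R := re a * re a + im a * im a.

Fixpoint Csum (f : nat -> C) (n : nat) : C :=
  match n with O => C0 | S n' => Cadd (Csum f n') (f n') end.

(** A vector of the Bargmann space B is identified with
    its coefficient sequence in the orthonormal basis e_k = z^k/sqrt(k!),
    i.e. B is identified (unitarily) with l^2(N; C). *)
Definition vec := nat -> C.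

Definition l2 (x : vec) : Prop :=
  exists s, infinite_sum (fun k => Cnorm2 (x k)) s.

(** B_p = closed span of {e_k : k >= p} *)
Definition inBp (p : nat) (x : vec) : Prop :=
  l2 x /\ forall k, (k < p)%nat -> x k = C0.

(** polynomials in B_p = finite linear combinations of e_k, k >= p *)
Definition polyBp (p : nat) (x : vec) : Prop :=
  (forall k, (k < p)%nat -> x k = C0) /\
  exists N, forall k, (N <= k)%nat -> x k = C0.

Definition l2conv (xs : nat -> vec) (x : vec) : Prop :=
  forall eps, eps > 0 -> exists N, forall n, (N <= n)%nat ->
    exists s, infinite_sum (fun k => Cnorm2 (Csub (xs n k) (x k))) s /\ s < eps.

(** inner product <u,v> = sum_k u_k conj(v_k) (linear in the first slot) *)
Definition has_inner (u v : vec) (z : C) : Prop :=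
  infinite_sum (fun k => re (Cmul (u k) (Cconj (v k)))) (re z) /\
  infinite_sum (fun k => im (Cmul (u k) (Cconj (v k)))) (im z).

(** * The matrix of H^{p,m} in the basis (e_k):
    Hmat p m j k = < H^{p,m} e_k , e_j >, read off from
    H e_k = 0                                         (k < p)
    H e_k = sqrt(k!(k+m)!)/(k-p)! e_{k+m}              (p <= k < p+m)
    H e_k = sqrt(k!(k-m)!)/(k-p-m)! e_{k-m}
            + sqrt(k!(k+m)!)/(k-p)! e_{k+m}            (k >= p+m). *)
Definition up_coef (p m k : nat) : R :=
  sqrt (INR (fact k) * INR (fact (k + m))) / INR (fact (k - p)).
Definition down_coef (p m k : nat) : R :=
  sqrt (INR (fact k) * INR (fact (k - m))) / INR (fact (k - p - m)).

Definition Hmat (p m j k : nat) : R :=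
  if Nat.ltb k p then 0
  else if Nat.ltb k (p + m) then
    (if Nat.eqb j (k + m) then up_coef p m k else 0)
  else
    (if Nat.eqb (j + m) k then down_coef p m k else 0)
    + (if Nat.eqb j (k + m) then up_coef p m k else 0).

(** action of H^{p,m} on a coefficient sequence (used on polynomials):
    (H x)_j = sum_k Hmat j k x_k ; only k = j +- m contribute, so k <= j+m. *)
Definition Happly (p m : nat) (x : vec) : vec := fun j =>
  mkC (sum_f_R0 (fun k => Hmat p m j k * re (x k)) (j + m))
      (sum_f_R0 (fun k => Hmat p m j k * im (x k)) (j + m)).

(** graph of the minimal operator: closure in B_p x B_p of the graph of
    H^{p,m} restricted to the polynomials of B_p *)
Definition Hmin (p m : nat) (x y : vec) : Prop :=
  inBp p x /\ inBp p y /\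
  exists xs : nat -> vec,
    (forall n, polyBp p (xs n)) /\ l2conv xs x /\ l2conv (fun n => Happly p m (xs n)) y.

(** deficiency subspace ker(T^* - s i I) for T = Hmin, s = +1 or -1:
    y in B_p with <T x, y> = <x, s i y> for all x in dom T. *)
Definition deficiency_space (p m : nat) (s : R) (y : vec) : Prop :=
  inBp p y /\
  forall x w, Hmin p m x w ->
    exists z, has_inner w y z /\ has_inner x (fun k => Cmul (mkC 0 s) (y k)) z.

Definition has_dim (P : vec -> Prop) (n : nat) : Prop :=
  exists f : nat -> vec,
    (forall i, (i < n)%nat -> P (f i)) /\
    (forall c : nat -> C,
        (forall k, Csum (fun i => Cmul (c i) (f i k)) n = C0) ->
        forall i, (i < n)%nat -> c i = C0) /\
    (forall y, P y -> exists c : nat -> C,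
        forall k, y k = Csum (fun i => Cmul (c i) (f i k)) n).

From Pilot Require Import Defs.
From Stdlib Require Import Reals Lra Lia Arith Psatz ClassicalEpsilon.
Open Scope R_scope.

(** Everything is computed in the orthonormal basis e_k, where H^{p,m} is a Jacobi
    matrix: (H x)_j = c_j x_{j+m} + c_{j-m} x_{j-m} with c_j = up_coef p m j (j >= p).
    - Closedness follows from the definition of Hmin as a closure, by a diagonal
      sequence of polynomial approximations; single-valuedness from coordinatewise
      convergence; symmetry from the finite identity <H a, w> = <a, H w> for
      polynomials a, passed to the limit by continuity of the inner product.
    - A deficiency vector for s i (s = +-1) is exactly a square summable formal
      solution of H y = s i y, tested against the unit vectors e_k.  Formal solutions
      form an m-dimensional space, parametrized by y_p, ..., y_{p+m-1}, since the
      recurrence can be solved for y_{j+m}.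
    - Every formal solution is square summable: the energy c_k |y_k|^2 grows at
      step k by at most a factor 1 + O(1/c_{k-2m} + 1/c_{k-m}), by log-concavity of
      c_k; since c_k >= (k-p+1)^{3/2} when 2p + m >= 3, these factors have a
      convergent product, so the energy is bounded and |y_k|^2 = O(k^{-3/2}). *)

Lemma Un_cv_const (c : R) : Un_cv (fun _ => c) c.
Proof. intros eps He. exists 0%nat. intros. unfold Rdist. rewrite Rminus_diag, Rabs_R0. lra. Qed.

Lemma Un_cv_ext (u v : nat -> R) l : (forall n, u n = v n) -> Un_cv u l -> Un_cv v l.
Proof. intros Huv Hu eps He. destruct (Hu eps He) as [N HN]. exists N. intros. rewrite <- Huv. auto. Qed.

Lemma Rabs_le_inv x b : Rabs x <= b -> -b <= x <= b.
Proof. unfold Rabs; destruct (Rcase_abs x); lra. Qed.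

Lemma sum_f_R0_zero f n : (forall k, (k <= n)%nat -> f k = 0) -> sum_f_R0 f n = 0.
Proof. intros H. induction n; simpl. apply H; lia. rewrite IHn, H by (auto; lia). ring. Qed.

Lemma sum_f_R0_single f n a : (forall k, k <> a -> f k = 0) -> (a <= n)%nat -> sum_f_R0 f n = f a.
Proof.
  intros H Ha. induction n.
  - replace a with 0%nat by lia. reflexivity.
  - simpl. destruct (Nat.eq_dec a (S n)) as [->|Hne].
    + rewrite sum_f_R0_zero by (intros; apply H; lia). ring.
    + rewrite IHn, (H (S n)) by lia. ring.
Qed.

Lemma partial_sum_le_sum f l : (forall k, 0 <= f k) -> infinite_sum f l ->
  forall n, sum_f_R0 f n <= l.
Proof. intros Hf Hl n. apply sum_incr; auto. Qed.

Lemma partial_sum_mono f a b : (forall k, 0 <= f k) -> (a <= b)%nat ->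
  sum_f_R0 f a <= sum_f_R0 f b.
Proof.
  intros Hf Hab. induction b as [|b IH].
  - replace a with 0%nat by lia. lra.
  - destruct (Nat.eq_dec a (S b)) as [->|]; [lra|]. simpl. specialize (Hf (S b)). specialize (IH ltac:(lia)). lra.
Qed.

Lemma term_le_partial_sum f k n : (forall k, 0 <= f k) -> (k <= n)%nat -> f k <= sum_f_R0 f n.
Proof.
  intros Hf Hk. apply Rle_trans with (sum_f_R0 f k); [|apply partial_sum_mono; auto].
  destruct k as [|k]; simpl; [lra|]. pose proof (cond_pos_sum f k Hf). lra.
Qed.

Lemma term_le_sum f l k : (forall k, 0 <= f k) -> infinite_sum f l -> f k <= l.
Proof.
  intros Hf Hl. apply Rle_trans with (sum_f_R0 f k).
  - apply term_le_partial_sum; auto.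
  - apply partial_sum_le_sum; auto.
Qed.

Lemma infinite_sum_ext f g l : (forall k, f k = g k) -> infinite_sum f l -> infinite_sum g l.
Proof.
  intros Hfg Hf eps He. destruct (Hf eps He) as [N HN]. exists N. intros n Hn.
  rewrite <- (sum_eq f g n) by auto. apply HN; auto.
Qed.

Lemma infinite_sum_plus f g a b : infinite_sum f a -> infinite_sum g b ->
  infinite_sum (fun k => f k + g k) (a + b).
Proof.
  intros Ha Hb eps He. destruct (CV_plus _ _ _ _ Ha Hb eps He) as [N HN].
  exists N. intros n Hn. rewrite plus_sum. apply HN; auto.
Qed.

Lemma infinite_sum_scal f a c : infinite_sum f a -> infinite_sum (fun k => c * f k) (c * a).
Proof.
  intros Ha eps He. destruct (CV_mult _ _ _ _ (Un_cv_const c) Ha eps He) as [N HN].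
  exists N. intros n Hn. rewrite (sum_eq _ (fun k => f k * c)) by (intros; ring).
  rewrite <- scal_sum. apply HN; auto.
Qed.

Lemma infinite_sum_finite f N : (forall k, (N <= k)%nat -> f k = 0) ->
  infinite_sum f (sum_f_R0 f N).
Proof.
  intros H eps He. exists N. intros n Hn.
  replace (sum_f_R0 f n) with (sum_f_R0 f N).
  { unfold Rdist. rewrite Rminus_diag, Rabs_R0. lra. }
  induction n as [|n IHn].
  - replace N with 0%nat by lia. reflexivity.
  - destruct (Nat.eq_dec N (S n)) as [->|]; [reflexivity|].
    simpl. rewrite H, <- IHn by lia. ring.
Qed.

Lemma infinite_sum_bounded f B : (forall k, 0 <= f k) -> (forall n, sum_f_R0 f n <= B) ->
  exists l, infinite_sum f l.
Proof.
  intros Hf HB. destruct (growing_cv (sum_f_R0 f)) as [l Hl].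
  - intro n. simpl. specialize (Hf (S n)). lra.
  - exists B. intros x [n ->]. auto.
  - exists l. exact Hl.
Qed.

Lemma infinite_sum_le f g G : (forall k, 0 <= f k <= g k) -> infinite_sum g G ->
  exists F, infinite_sum f F /\ 0 <= F <= G.
Proof.
  intros Hfg HG. destruct (Rseries_CV_comp f g Hfg (exist _ G HG)) as [F HF].
  exists F. split; [exact HF|]. split.
  - apply Rle_trans with (sum_f_R0 f 0); [simpl; apply Hfg|].
    apply partial_sum_le_sum; auto. apply Hfg.
  - eapply Rle_cv_lim; [|exact HF|exact HG].
    intro n. apply sum_Rle. intros; apply Hfg.
Qed.

Lemma infinite_sum_abs f g G : (forall k, Rabs (f k) <= g k) -> infinite_sum g G ->
  exists F, infinite_sum f F /\ Rabs F <= G.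
Proof.
  intros Hfg HG.
  assert (Hg0 : forall k, 0 <= g k) by (intro k; pose proof (Rabs_pos (f k)); pose proof (Hfg k); lra).
  destruct (infinite_sum_le (fun k => f k + g k) (fun k => 2 * g k) (2 * G)) as [F1 [HF1 HF1b]].
  { intro k. pose proof (Rabs_le_inv _ _ (Hfg k)). lra. }
  { apply infinite_sum_scal; auto. }
  exists (F1 + (-1) * G). split.
  - apply infinite_sum_ext with (fun k => (f k + g k) + (-1) * g k); [intro; ring|].
    apply infinite_sum_plus; auto. apply infinite_sum_scal; auto.
  - pose proof (term_le_sum g G 0 Hg0 HG). pose proof (Hg0 0%nat). apply Rabs_le. lra.
Qed.

Lemma infinite_sum_unshift f m l : (forall k, (k < m)%nat -> f k = 0) ->
  infinite_sum (fun j => f (j + m)%nat) l -> infinite_sum f l.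
Proof.
  intros H Hl eps He. destruct (Hl eps He) as [N HN]. exists (N + m)%nat. intros n Hn.
  assert (Shift : forall n, sum_f_R0 f (n + m) = sum_f_R0 (fun j => f (j + m)%nat) n).
  { induction n0 as [|n0 IH].
    - destruct m as [|m']; [reflexivity|].
      simpl. rewrite sum_f_R0_zero by (intros; apply H; lia). ring.
    - replace (S n0 + m)%nat with (S (n0 + m)) by lia. simpl. rewrite IH. reflexivity. }
  replace n with ((n - m) + m)%nat by lia. rewrite Shift. apply HN. lia.
Qed.

Lemma Ceq a b : re a = re b -> im a = im b -> a = b.
Proof. destruct a, b; simpl; intros; subst; auto. Qed.

Definition Cscale (r : R) (z : Defs.C) : Defs.C := mkC (r * re z) (r * im z).

Lemma Cnorm2_nonneg a : 0 <= Cnorm2 a.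
Proof. unfold Cnorm2. nra. Qed.

Lemma Cnorm2_sub_le a b c : Cnorm2 (Csub a c) <= 2 * Cnorm2 (Csub a b) + 2 * Cnorm2 (Csub b c).
Proof.
  unfold Cnorm2, Csub; simpl.
  pose proof (Rle_0_sqr (re a - 2 * re b + re c)). pose proof (Rle_0_sqr (im a - 2 * im b + im c)).
  unfold Rsqr in *. lra.
Qed.

Lemma sqnorm_nonneg (x : vec) A : infinite_sum (fun k => Cnorm2 (x k)) A -> 0 <= A.
Proof.
  intros H. apply Rle_trans with (Cnorm2 (x 0%nat)); [apply Cnorm2_nonneg|].
  apply (term_le_sum (fun k => Cnorm2 (x k))); auto using Cnorm2_nonneg.
Qed.

Lemma l2_finite (x : vec) N : (forall k, (N <= k)%nat -> x k = C0) -> l2 x.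
Proof.
  intros H. exists (sum_f_R0 (fun k => Cnorm2 (x k)) N). apply infinite_sum_finite.
  intros k Hk. rewrite H by auto. unfold Cnorm2; simpl; ring.
Qed.

Definition close (u v : vec) (eps : R) : Prop :=
  exists s, infinite_sum (fun k => Cnorm2 (Csub (u k) (v k))) s /\ s < eps.

Lemma close_trans u v w e1 e2 : close u v e1 -> close v w e2 -> close u w (2 * e1 + 2 * e2).
Proof.
  intros [s1 [H1 H1']] [s2 [H2 H2']].
  destruct (infinite_sum_le (fun k => Cnorm2 (Csub (u k) (w k)))
     (fun k => 2 * Cnorm2 (Csub (u k) (v k)) + 2 * Cnorm2 (Csub (v k) (w k))) (2 * s1 + 2 * s2))
   as [s [Hs Hs']].
  - intro k. split; [apply Cnorm2_nonneg|apply Cnorm2_sub_le].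
  - apply infinite_sum_plus; apply infinite_sum_scal; auto.
  - exists s. split; auto. lra.
Qed.

Lemma l2conv_const (v : vec) : l2conv (fun _ => v) v.
Proof.
  intros eps He. exists 0%nat. intros n _. exists (sum_f_R0 (fun _ => 0) 0).
  split; [|simpl; lra].
  apply infinite_sum_ext with (fun _ => 0); [intro k; unfold Cnorm2, Csub; simpl; ring|].
  apply infinite_sum_finite. auto.
Qed.

Lemma l2_of_l2conv xs x : l2conv xs x -> (forall n, l2 (xs n)) -> l2 x.
Proof.
  intros Hc Hl. destruct (Hc 1 ltac:(lra)) as [N HN]. destruct (HN N (le_n _)) as [s [Hs _]].
  destruct (Hl N) as [t Ht].
  destruct (infinite_sum_le (fun k => Cnorm2 (x k))
     (fun k => 2 * Cnorm2 (xs N k) + 2 * Cnorm2 (Csub (xs N k) (x k))) (2 * t + 2 * s))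
   as [F [HF _]].
  - intro k. split; [apply Cnorm2_nonneg|].
    pose proof (Cnorm2_sub_le C0 (xs N k) (x k)) as Htri.
    unfold Cnorm2, Csub in *; simpl in *. nra.
  - apply infinite_sum_plus; apply infinite_sum_scal; auto.
  - exists F; auto.
Qed.

Lemma l2conv_coord xs x k : l2conv xs x ->
  Un_cv (fun n => re (xs n k)) (re (x k)) /\ Un_cv (fun n => im (xs n k)) (im (x k)).
Proof.
  intros H.
  assert (Small : forall a e, 0 < e -> a * a < e * e -> Rabs a < e)
    by (intros a e ? ?; unfold Rabs; destruct (Rcase_abs a); nra).
  split; intros eps He; destruct (H (eps * eps) ltac:(nra)) as [N HN]; exists N;
  intros n Hn; destruct (HN n Hn) as [s [Hs Hs2]];
  pose proof (term_le_sum _ _ k (fun k => Cnorm2_nonneg _) Hs) as Hk;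
  unfold Cnorm2, Csub in Hk; simpl in Hk; unfold Rdist; apply Small; auto;
  pose proof (Rle_0_sqr (re (xs n k) - re (x k))); pose proof (Rle_0_sqr (im (xs n k) - im (x k)));
  unfold Rsqr in *; lra.
Qed.

Lemma l2conv_zero_coord xs x k : l2conv xs x -> (forall n, xs n k = C0) -> x k = C0.
Proof.
  intros H Hz. destruct (l2conv_coord _ _ k H) as [H1 H2].
  apply Ceq; simpl.
  - eapply UL_sequence; [exact H1|]. apply (Un_cv_ext (fun _ => 0)); [|apply Un_cv_const].
    intro n. rewrite Hz. reflexivity.
  - eapply UL_sequence; [exact H2|]. apply (Un_cv_ext (fun _ => 0)); [|apply Un_cv_const].
    intro n. rewrite Hz. reflexivity.
Qed.

Definition inner_part (b : bool) (u v : Defs.C) : R :=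
  if b then re (Cmul u (Cconj v)) else im (Cmul u (Cconj v)).

Lemma has_inner_parts u v z :
  infinite_sum (fun k => inner_part true (u k) (v k)) (re z) ->
  infinite_sum (fun k => inner_part false (u k) (v k)) (im z) -> has_inner u v z.
Proof. split; assumption. Qed.

Lemma inner_part_zero_l b z : inner_part b C0 z = 0.
Proof. destruct b; unfold inner_part; simpl; ring. Qed.

Lemma inner_part_lin_l b c x d y z :
  inner_part b (Cadd (Cscale c x) (Cscale d y)) z = c * inner_part b x z + d * inner_part b y z.
Proof. destruct b; unfold inner_part, Cadd, Cscale; simpl; ring. Qed.

Lemma inner_part_lin_r b c x d y z :
  inner_part b z (Cadd (Cscale c x) (Cscale d y)) = c * inner_part b z x + d * inner_part b z y.
Proof. destruct b; unfold inner_part, Cadd, Cscale; simpl; ring. Qed.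

Lemma inner_part_bound b u v T : 0 < T ->
  Rabs (inner_part b u v) <= (T * Cnorm2 u + Cnorm2 v / T) / 2.
Proof.
  intros HT.
  assert (AMGM : forall x y, Rabs (x * y) <= (T * x * x + y * y / T) / 2).
  { intros x y. apply Rabs_le.
    assert (0 <= (T * x - y) * (T * x - y) / T) by (apply Rmult_le_pos; [apply Rle_0_sqr|left; apply Rinv_0_lt_compat; lra]).
    assert (0 <= (T * x + y) * (T * x + y) / T) by (apply Rmult_le_pos; [apply Rle_0_sqr|left; apply Rinv_0_lt_compat; lra]).
    assert ((T * x - y) * (T * x - y) / T = T * x * x - 2 * (x * y) + y * y / T) by (field; lra).
    assert ((T * x + y) * (T * x + y) / T = T * x * x + 2 * (x * y) + y * y / T) by (field; lra).
    lra. }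
  apply Rabs_le. unfold inner_part, Cnorm2, Cmul, Cconj; simpl.
  set (a := re u); set (c := im u); set (d := re v); set (e := im v).
  assert (Split : (T * (a * a + c * c) + (d * d + e * e) / T) / 2
                = (T * a * a + d * d / T) / 2 + (T * c * c + e * e / T) / 2
                /\ (T * (a * a + c * c) + (d * d + e * e) / T) / 2
                = (T * c * c + d * d / T) / 2 + (T * a * a + e * e / T) / 2) by (split; field; lra).
  pose proof (Rabs_le_inv _ _ (AMGM a d)). pose proof (Rabs_le_inv _ _ (AMGM c e)).
  pose proof (Rabs_le_inv _ _ (AMGM c d)). pose proof (Rabs_le_inv _ _ (AMGM a e)).
  destruct b; lra.
Qed.

Lemma inner_part_exists b u v : l2 u -> l2 v ->
  exists z, infinite_sum (fun k => inner_part b (u k) (v k)) z.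
Proof.
  intros [A HA] [B HB].
  destruct (infinite_sum_abs (fun k => inner_part b (u k) (v k))
              (fun k => / 2 * (Cnorm2 (u k) + Cnorm2 (v k))) (/ 2 * (A + B))) as [F [HF _]].
  - intro k. pose proof (inner_part_bound b (u k) (v k) 1 ltac:(lra)). lra.
  - apply infinite_sum_scal, infinite_sum_plus; auto.
  - exists F; auto.
Qed.

Lemma inner_part_diff_bound b u v a c T : 1 <= T ->
  Rabs (inner_part b u v - inner_part b a c)
  <= ((1 + T) * (Cnorm2 (Csub u a) + Cnorm2 (Csub v c)) + (Cnorm2 a + Cnorm2 c) / T) / 2.
Proof.
  intros HT. set (du := Csub u a). set (dv := Csub v c).
  assert (E : inner_part b u v - inner_part b a c =
     inner_part b du dv + inner_part b du c + (if b then 1 else -1) * inner_part b dv a).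
  { unfold du, dv, inner_part, Cmul, Cconj, Csub; destruct b; simpl; ring. }
  rewrite E.
  assert (Hsign : Rabs (if b then 1 else -1) = 1) by (destruct b; unfold Rabs; destruct Rcase_abs; lra).
  pose proof (Rabs_triang (inner_part b du dv + inner_part b du c)
                          ((if b then 1 else -1) * inner_part b dv a)).
  pose proof (Rabs_triang (inner_part b du dv) (inner_part b du c)).
  rewrite Rabs_mult, Hsign in *.
  pose proof (inner_part_bound b du dv 1 ltac:(lra)).
  pose proof (inner_part_bound b du c T ltac:(lra)).
  pose proof (inner_part_bound b dv a T ltac:(lra)).
  pose proof (Cnorm2_nonneg du). pose proof (Cnorm2_nonneg dv).
  assert (E2 : ((1 + T) * (Cnorm2 du + Cnorm2 dv) + (Cnorm2 a + Cnorm2 c) / T) / 2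
    = (T * Cnorm2 du + Cnorm2 c / T) / 2 + (T * Cnorm2 dv + Cnorm2 a / T) / 2
      + (1 * Cnorm2 du + Cnorm2 dv / 1) / 2) by (field; lra).
  rewrite E2. lra.
Qed.

Lemma inner_part_continuous b us a vs c A B :
  l2conv us a -> l2conv vs c ->
  infinite_sum (fun k => Cnorm2 (a k)) A -> infinite_sum (fun k => Cnorm2 (c k)) B ->
  forall eps, eps > 0 -> exists N, forall n, (N <= n)%nat -> forall Z Z0,
    infinite_sum (fun k => inner_part b (us n k) (vs n k)) Z ->
    infinite_sum (fun k => inner_part b (a k) (c k)) Z0 -> Rabs (Z - Z0) < eps.
Proof.
  intros Hu Hv HA HB eps He.
  pose proof (sqnorm_nonneg a A HA). pose proof (sqnorm_nonneg c B HB).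
  set (T := (A + B) / eps + 1).
  assert (HT1 : 1 <= T) by (unfold T; assert (0 <= (A + B) / eps) by (apply Rmult_le_pos; [lra|left; apply Rinv_0_lt_compat; lra]); lra).
  assert (HT : (A + B) / T < eps).
  { apply Rmult_lt_reg_r with T; [lra|]. unfold Rdiv. rewrite Rmult_assoc, Rinv_l by lra.
    unfold T. field_simplify; lra. }
  set (d := eps / (2 * (1 + T))).
  assert (Hd : 0 < d) by (unfold d; apply Rdiv_lt_0_compat; lra).
  destruct (Hu d Hd) as [N1 HN1]. destruct (Hv d Hd) as [N2 HN2].
  exists (max N1 N2). intros n Hn Z Z0 HZ HZ0.
  destruct (HN1 n ltac:(lia)) as [sa [Hsa Hsa2]]. destruct (HN2 n ltac:(lia)) as [sb [Hsb Hsb2]].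
  destruct (infinite_sum_abs
     (fun k => inner_part b (us n k) (vs n k) + (-1) * inner_part b (a k) (c k))
     (fun k => / 2 * ((1 + T) * (Cnorm2 (Csub (us n k) (a k)) + Cnorm2 (Csub (vs n k) (c k)))
                      + / T * (Cnorm2 (a k) + Cnorm2 (c k))))
     (/ 2 * ((1 + T) * (sa + sb) + / T * (A + B)))) as [F [HF HF2]].
  - intro k. pose proof (inner_part_diff_bound b (us n k) (vs n k) (a k) (c k) T HT1).
    replace (inner_part b (us n k) (vs n k) + -1 * inner_part b (a k) (c k))
      with (inner_part b (us n k) (vs n k) - inner_part b (a k) (c k)) by ring.
    unfold Rdiv in *. lra.
  - apply infinite_sum_scal, infinite_sum_plus; apply infinite_sum_scal, infinite_sum_plus; auto.
  - assert (HF3 : F = Z + (-1) * Z0).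
    { eapply uniqueness_sum; [exact HF|]. apply infinite_sum_plus; auto. apply infinite_sum_scal; auto. }
    replace (Z - Z0) with F by lra.
    assert ((1 + T) * (sa + sb) < (1 + T) * (2 * d)) by (apply Rmult_lt_compat_l; lra).
    assert ((1 + T) * (2 * d) = eps) by (unfold d; field; lra).
    unfold Rdiv in HT. lra.
Qed.

Lemma inner_limit_eq us a vs c ws e zs g :
  l2conv us a -> l2conv vs c -> l2conv ws e -> l2conv zs g ->
  l2 a -> l2 c -> l2 e -> l2 g ->
  (forall b n, exists S, infinite_sum (fun k => inner_part b (us n k) (vs n k)) S /\
                         infinite_sum (fun k => inner_part b (ws n k) (zs n k)) S) ->
  exists z, has_inner a c z /\ has_inner e g z.
Proof.
  intros Hu Hv Hw Hz [A HA] [B HB] [E HE] [G HG] HS.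
  assert (Part : forall b, exists Z0, infinite_sum (fun k => inner_part b (a k) (c k)) Z0 /\
                                      infinite_sum (fun k => inner_part b (e k) (g k)) Z0).
  { intro b.
    destruct (inner_part_exists b a c) as [Z0 HZ0]; [exists A; auto|exists B; auto|].
    destruct (inner_part_exists b e g) as [W0 HW0]; [exists E; auto|exists G; auto|].
    exists Z0. split; auto. replace Z0 with W0; auto.
    apply cond_eq. intros eps He.
    destruct (inner_part_continuous b us a vs c A B Hu Hv HA HB (eps / 2) ltac:(lra)) as [N1 HN1].
    destruct (inner_part_continuous b ws e zs g E G Hw Hz HE HG (eps / 2) ltac:(lra)) as [N2 HN2].
    destruct (HS b (max N1 N2)) as [S [HS1 HS2]].
    pose proof (HN1 (max N1 N2) ltac:(lia) S Z0 HS1 HZ0).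
    pose proof (HN2 (max N1 N2) ltac:(lia) S W0 HS2 HW0).
    replace (W0 - Z0) with ((S - Z0) - (S - W0)) by ring.
    eapply Rle_lt_trans; [apply Rabs_triang|]. rewrite Rabs_Ropp. lra. }
  destruct (Part true) as [r [Hr1 Hr2]]. destruct (Part false) as [i [Hi1 Hi2]].
  exists (mkC r i). split; apply has_inner_parts; simpl; auto.
Qed.

Definition unit_vec (k : nat) : vec := fun j => if Nat.eqb j k then mkC 1 0 else C0.

Lemma inner_unit_vec b k (v : vec) :
  infinite_sum (fun j => inner_part b (unit_vec k j) (v j)) (inner_part b (mkC 1 0) (v k)).
Proof.
  replace (inner_part b (mkC 1 0) (v k)) with (sum_f_R0 (fun j => inner_part b (unit_vec k j) (v j)) (S k)).
  - apply infinite_sum_finite. intros j Hj. unfold unit_vec.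
    destruct (Nat.eqb_spec j k); [lia|apply inner_part_zero_l].
  - rewrite (sum_f_R0_single _ _ k); [|intros j Hj|lia].
    + unfold unit_vec. rewrite Nat.eqb_refl. reflexivity.
    + unfold unit_vec. destruct (Nat.eqb_spec j k); [lia|apply inner_part_zero_l].
Qed.

(** ** The Jacobi structure of the matrix of H^{p,m} *)

Section JacobiMatrix.
Variables p m : nat.

(* [jac j]: the matrix entry <H e_j, e_{j+m}>, zero for j < p *)
Definition jac (j : nat) : R := if Nat.leb p j then up_coef p m j else 0.

Definition jac_lo (j : nat) : R := if Nat.leb m j then jac (j - m) else 0.

Lemma jac_low j : (j < p)%nat -> jac j = 0.
Proof. intros. unfold jac. destruct (Nat.leb_spec p j); [lia|reflexivity]. Qed.

Lemma jac_high j : (p <= j)%nat -> jac j = up_coef p m j.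
Proof. intros. unfold jac. destruct (Nat.leb_spec p j); [reflexivity|lia]. Qed.

Lemma jac_lo_shift j : jac_lo (j + m) = jac j.
Proof.
  unfold jac_lo. replace (j + m - m)%nat with j by lia.
  destruct (Nat.leb_spec m (j + m)); [reflexivity|lia].
Qed.

Lemma jac_lo_low j : (j < p + m)%nat -> jac_lo j = 0.
Proof.
  intros. unfold jac_lo. destruct (Nat.leb_spec m j); [|reflexivity]. apply jac_low. lia.
Qed.

Lemma jac_lo_high j : (p + m <= j)%nat -> jac_lo j = up_coef p m (j - m).
Proof. intros. unfold jac_lo. destruct (Nat.leb_spec m j); [apply jac_high|]; lia. Qed.

Lemma Hmat_jacobi j k : Hmat p m j k =
  (if Nat.eqb j (k + m) then jac k else 0) + (if Nat.eqb (j + m) k then jac j else 0).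
Proof.
  unfold Hmat, jac, down_coef, up_coef.
  destruct (Nat.ltb_spec k p); destruct (Nat.ltb_spec k (p + m));
  destruct (Nat.eqb_spec j (k + m)); destruct (Nat.eqb_spec (j + m) k);
  destruct (Nat.leb_spec p k); destruct (Nat.leb_spec p j); try lia; try ring;
  subst k; replace (j + m - m)%nat with j by lia; replace (j + m - p - m)%nat with (j - p)%nat by lia;
  rewrite (Rmult_comm (INR (fact (j + m)))); ring.
Qed.

Lemma Happly_jacobi x j :
  Happly p m x j = Cadd (Cscale (jac j) (x (j + m)%nat)) (Cscale (jac_lo j) (x (j - m)%nat)).
Proof.
  assert (Row : forall v : nat -> R, sum_f_R0 (fun k => Hmat p m j k * v k) (j + m)
                  = jac j * v (j + m)%nat + jac_lo j * v (j - m)%nat).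
  { intro v.
    rewrite (sum_eq _ (fun k => (if Nat.eqb (j + m) k then jac j else 0) * v k +
                                (if Nat.eqb j (k + m) then jac k else 0) * v k))
      by (intros; rewrite Hmat_jacobi; ring).
    rewrite plus_sum. f_equal.
    - rewrite (sum_f_R0_single _ _ (j + m)), Nat.eqb_refl; [reflexivity| |lia].
      intros k Hk. destruct (Nat.eqb_spec (j + m) k); [lia|ring].
    - unfold jac_lo. destruct (Nat.leb_spec m j).
      + rewrite (sum_f_R0_single _ _ (j - m)); [|intros k Hk|lia].
        * replace (j - m + m)%nat with j by lia. rewrite Nat.eqb_refl. reflexivity.
        * destruct (Nat.eqb_spec j (k + m)); [lia|ring].
      + rewrite Rmult_0_l. apply sum_f_R0_zero. intros k Hk.
        destruct (Nat.eqb_spec j (k + m)); [lia|ring]. }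
  apply Ceq; simpl; apply (Row (fun k => _ (x k))).
Qed.

Lemma Happly_low x j : (j < p)%nat -> Happly p m x j = C0.
Proof.
  intros H. rewrite Happly_jacobi, jac_low, jac_lo_low by lia. apply Ceq; simpl; ring.
Qed.

(* Symmetry of H on finitely supported sequences: <H a, w> = <a, H w>, for
   every sequence w (no summability of w is needed since a has finite support). *)
Lemma Happly_symmetric b (a w : vec) N : (forall k, (N <= k)%nat -> a k = C0) ->
  exists S, infinite_sum (fun j => inner_part b (Happly p m a j) (w j)) S /\
            infinite_sum (fun k => inner_part b (a k) (Happly p m w k)) S.
Proof.
  intros Ha.
  set (Up := fun j => jac j * inner_part b (a (j + m)%nat) (w j)).
  set (Down := fun k => jac k * inner_part b (a k) (w (k + m)%nat)).
  assert (HUp : infinite_sum Up (sum_f_R0 Up N)).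
  { apply infinite_sum_finite. intros k Hk. unfold Up. rewrite Ha, inner_part_zero_l by lia. ring. }
  assert (HDown : infinite_sum Down (sum_f_R0 Down N)).
  { apply infinite_sum_finite. intros k Hk. unfold Down. rewrite Ha, inner_part_zero_l by lia. ring. }
  exists (sum_f_R0 Up N + sum_f_R0 Down N). split.
  - apply infinite_sum_ext with (fun j => Up j + jac_lo j * inner_part b (a (j - m)%nat) (w j)).
    { intro j. rewrite Happly_jacobi, inner_part_lin_l. reflexivity. }
    apply infinite_sum_plus; auto. apply infinite_sum_unshift with m.
    { intros k Hk. rewrite jac_lo_low by lia. ring. }
    eapply infinite_sum_ext; [|exact HDown]. intro k. unfold Down.
    rewrite jac_lo_shift. replace (k + m - m)%nat with k by lia. reflexivity.
  - apply infinite_sum_ext with (fun k => jac_lo k * inner_part b (a k) (w (k - m)%nat) + Down k).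
    { intro k. rewrite Happly_jacobi, inner_part_lin_r. unfold Down. ring. }
    apply infinite_sum_plus; auto. apply infinite_sum_unshift with m.
    { intros k Hk. rewrite jac_lo_low by lia. ring. }
    eapply infinite_sum_ext; [|exact HUp]. intro k. unfold Up.
    rewrite jac_lo_shift. replace (k + m - m)%nat with k by lia. reflexivity.
Qed.

Lemma Happly_add x x' j :
  Happly p m (fun k => Cadd (x k) (x' k)) j = Cadd (Happly p m x j) (Happly p m x' j).
Proof. rewrite !Happly_jacobi. apply Ceq; unfold Cadd, Cscale; simpl; ring. Qed.

Lemma Happly_mul c x j : Happly p m (fun k => Cmul c (x k)) j = Cmul c (Happly p m x j).
Proof. rewrite !Happly_jacobi. apply Ceq; unfold Cadd, Cscale, Cmul; simpl; ring. Qed.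

End JacobiMatrix.

(** ** The minimal operator is a closed symmetric operator *)

Lemma inBp_of_l2conv p xs x : (forall n, inBp p (xs n)) -> l2conv xs x -> inBp p x.
Proof.
  intros Hxs Hx. split.
  - apply (l2_of_l2conv xs); auto. intro n. apply Hxs.
  - intros k Hk. apply (l2conv_zero_coord xs); auto. intro n. apply Hxs; auto.
Qed.

Lemma Hmin_Happly p m x y : Hmin p m x y -> forall j, y j = Happly p m x j.
Proof.
  intros [_ [_ [xs [_ [Hx Hy]]]]] j.
  destruct (l2conv_coord _ _ j Hy) as [Hr Hi].
  destruct (l2conv_coord _ _ (j + m) Hx) as [Hr1 Hi1].
  destruct (l2conv_coord _ _ (j - m) Hx) as [Hr2 Hi2].
  rewrite Happly_jacobi. apply Ceq; simpl; eapply UL_sequence; eauto;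
  (eapply Un_cv_ext; [intro n; rewrite Happly_jacobi; reflexivity|]); simpl;
  apply CV_plus; apply CV_mult; auto using Un_cv_const.
Qed.

Lemma Hmin_approx p m x y : Hmin p m x y -> forall eps, eps > 0 ->
  exists P, polyBp p P /\ close P x eps /\ close (Happly p m P) y eps.
Proof.
  intros [_ [_ [xs [Hp [Hx Hy]]]]] eps He.
  destruct (Hx eps He) as [N1 HN1]. destruct (Hy eps He) as [N2 HN2].
  exists (xs (max N1 N2)). split; auto. split; [apply HN1|apply HN2]; lia.
Qed.

Lemma l2conv_of_close (qs xs : nat -> vec) x :
  (forall n, close (qs n) (xs n) (/ (INR n + 1))) -> l2conv xs x -> l2conv qs x.
Proof.
  intros Hq Hx eps He.
  destruct (archimed_cor1 (eps / 4) ltac:(lra)) as [M [HM1 HM2]].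
  destruct (Hx (eps / 4) ltac:(lra)) as [N HN].
  exists (max M N). intros n Hn.
  destruct (close_trans _ _ _ _ _ (Hq n) (HN n ltac:(lia))) as [s [Hs1 Hs2]].
  exists s. split; auto.
  assert (/ (INR n + 1) <= / INR M).
  { apply Rinv_le_contravar; [apply lt_0_INR; lia|]. pose proof (le_INR M n ltac:(lia)). lra. }
  lra.
Qed.

(* Closedness: a diagonal sequence of polynomial approximations. *)
Lemma Hmin_closed p m (xs ys : nat -> vec) x y :
  (forall n, Hmin p m (xs n) (ys n)) -> l2conv xs x -> l2conv ys y -> Hmin p m x y.
Proof.
  intros HH Hx Hy.
  assert (Approx : forall n : nat, exists P, polyBp p P /\ close P (xs n) (/ (INR n + 1)) /\
                                   close (Happly p m P) (ys n) (/ (INR n + 1))).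
  { intro n. apply Hmin_approx; auto. apply Rinv_0_lt_compat. pose proof (pos_INR n). lra. }
  destruct (choice _ Approx) as [Q HQ].
  split; [|split].
  - apply (inBp_of_l2conv p xs); auto. intro n. apply HH.
  - apply (inBp_of_l2conv p ys); auto. intro n. apply HH.
  - exists Q. split; [intro n; apply HQ|].
    split; eapply l2conv_of_close; eauto; intro n; apply HQ.
Qed.

(* Symmetry: <H x, x'> = <x, H x'>, the limit of the identity on polynomials. *)
Lemma Hmin_symmetric p m x y x' y' : Hmin p m x y -> Hmin p m x' y' ->
  exists z, has_inner y x' z /\ has_inner x y' z.
Proof.
  intros [Lx [Ly [xs [Pxs [Cx Cy]]]]] [Lx' [Ly' [xs' [Pxs' [Cx' Cy']]]]].
  apply (inner_limit_eq (fun n => Happly p m (xs n)) y xs' x' xs x (fun n => Happly p m (xs' n)) y');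
    try assumption; try apply Lx; try apply Ly; try apply Lx'; try apply Ly'.
  intros b n. destruct (Pxs n) as [_ [N HN]].
  apply (Happly_symmetric p m b (xs n) (xs' n) N HN).
Qed.

(** ** Growth and log-concavity of the off-diagonal coefficients *)

Lemma fact_mul_pow_le j t : (fact j * (j + 1) ^ t <= fact (j + t))%nat.
Proof.
  induction t as [|t IH].
  - rewrite Nat.add_0_r. simpl. lia.
  - replace (j + S t)%nat with (S (j + t)) by lia. rewrite Nat.pow_succ_r'. simpl fact.
    assert (j + 1 <= S (j + t))%nat by lia. nia.
Qed.

Lemma INR_fact_pos n : 0 < INR (fact n).
Proof. apply lt_0_INR, lt_O_fact. Qed.

Lemma sqrt_ge_1 x : 1 <= x -> 1 <= sqrt x /\ sqrt x * sqrt x = x.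
Proof. intros H. split; [rewrite <- sqrt_1; apply sqrt_le_1_alt; auto|apply sqrt_sqrt; lra]. Qed.

(* (a + P)(a + Q)/a^2 = 1 + (P + Q)/a + PQ/a^2 decreases in a >= 1. *)
Lemma shifted_ratio_antitone a a' P Q : 1 <= a <= a' -> 0 <= P -> 0 <= Q ->
  (a' + P) * (a' + Q) / (a' * a') <= (a + P) * (a + Q) / (a * a).
Proof.
  intros Ha HP HQ.
  assert (E : forall b, 1 <= b -> (b + P) * (b + Q) / (b * b) = 1 + (P + Q) * / b + (P * Q) * / (b * b))
    by (intros b Hb; field; lra).
  rewrite !E by lra.
  assert (/ a' <= / a) by (apply Rinv_le_contravar; lra).
  assert (/ (a' * a') <= / (a * a)) by (apply Rinv_le_contravar; nra).
  assert (0 <= P * Q) by nra. nra.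
Qed.

Section Coefficients.
Variables p m : nat.

Definition coef_sq (k : nat) : R :=
  INR (fact k) * INR (fact (k + m)) / (INR (fact (k - p)) * INR (fact (k - p))).

Lemma up_coef_nonneg k : 0 <= up_coef p m k.
Proof.
  unfold up_coef. apply Rmult_le_pos; [apply sqrt_pos|].
  left. apply Rinv_0_lt_compat, INR_fact_pos.
Qed.

Lemma up_coef_sq k : up_coef p m k * up_coef p m k = coef_sq k.
Proof.
  unfold up_coef, coef_sq. pose proof (INR_fact_pos (k - p)).
  pose proof (INR_fact_pos k). pose proof (INR_fact_pos (k + m)).
  rewrite <- (sqrt_sqrt (INR (fact k) * INR (fact (k + m)))) at 3 by nra.
  field. lra.
Qed.

Lemma coef_sq_pos k : 0 < coef_sq k.
Proof.
  unfold coef_sq. pose proof (INR_fact_pos k). pose proof (INR_fact_pos (k + m)).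
  pose proof (INR_fact_pos (k - p)). apply Rdiv_lt_0_compat; nra.
Qed.

Lemma coef_sq_cubic k : (3 <= 2 * p + m)%nat -> (p <= k)%nat ->
  (INR (k - p) + 1) * ((INR (k - p) + 1) * (INR (k - p) + 1)) <= coef_sq k.
Proof.
  intros H3 Hk. set (j := (k - p)%nat).
  pose proof (fact_mul_pow_le j p) as F1. pose proof (fact_mul_pow_le j (p + m)) as F2.
  replace (j + p)%nat with k in F1 by (unfold j; lia).
  replace (j + (p + m))%nat with (k + m)%nat in F2 by (unfold j; lia).
  assert (F3 : ((j + 1) ^ 3 <= (j + 1) ^ (p + (p + m)))%nat) by (apply Nat.pow_le_mono_r; lia).
  assert (F4 : (fact j * fact j * (j + 1) ^ 3 <= fact k * fact (k + m))%nat)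
    by (rewrite Nat.pow_add_r in F3; nia).
  apply le_INR in F4. rewrite !mult_INR, pow_INR, plus_INR in F4. simpl INR in F4.
  unfold coef_sq. fold j. pose proof (INR_fact_pos j).
  apply Rmult_le_reg_r with (INR (fact j) * INR (fact j)); [nra|].
  replace (INR (fact k) * INR (fact (k + m)) / (INR (fact j) * INR (fact j)) * (INR (fact j) * INR (fact j)))
    with (INR (fact k) * INR (fact (k + m))) by (field; lra).
  nra.
Qed.

Lemma up_coef_ge_1 k : (3 <= 2 * p + m)%nat -> (p <= k)%nat -> 1 <= up_coef p m k.
Proof.
  intros H3 Hk. pose proof (coef_sq_cubic k H3 Hk). rewrite <- up_coef_sq in H.
  pose proof (pos_INR (k - p)). pose proof (up_coef_nonneg k). nra.
Qed.

(* coef_sq (x+1) / coef_sq x = (x+1)(x+m+1)/(x-p+1)^2, a decreasing ratio *)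
Definition coef_ratio (x : nat) : R :=
  (INR x + 1) * (INR x + INR m + 1) / ((INR (x - p) + 1) * (INR (x - p) + 1)).

Lemma coef_sq_succ x : (p <= x)%nat -> coef_sq (S x) = coef_ratio x * coef_sq x.
Proof.
  intros H. unfold coef_sq, coef_ratio.
  replace (S x - p)%nat with (S (x - p)) by lia. replace (S x + m)%nat with (S (x + m)) by lia.
  rewrite !fact_simpl, !mult_INR, !S_INR, plus_INR.
  pose proof (INR_fact_pos (x - p)). pose proof (pos_INR (x - p)). field. nra.
Qed.

Lemma coef_ratio_nonneg x : 0 <= coef_ratio x.
Proof.
  unfold coef_ratio. pose proof (pos_INR x). pose proof (pos_INR m). pose proof (pos_INR (x - p)).
  apply Rmult_le_pos; [nra|]. left. apply Rinv_0_lt_compat. nra.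
Qed.

Lemma coef_ratio_antitone x x' : (p <= x)%nat -> (x <= x')%nat -> coef_ratio x' <= coef_ratio x.
Proof.
  intros H1 H2. unfold coef_ratio.
  assert (E : forall y, (p <= y)%nat -> INR y + 1 = (INR (y - p) + 1) + INR p)
    by (intros y Hy; rewrite <- (Nat.sub_add p y Hy) at 1; rewrite plus_INR; ring).
  replace (INR x + INR m + 1) with (INR x + 1 + INR m) by ring.
  replace (INR x' + INR m + 1) with (INR x' + 1 + INR m) by ring.
  rewrite (E x), (E x') by lia.
  rewrite (Rplus_assoc (INR (x - p) + 1)), (Rplus_assoc (INR (x' - p) + 1)).
  apply shifted_ratio_antitone; pose proof (pos_INR p); pose proof (pos_INR m); try lra.
  pose proof (pos_INR (x - p)). pose proof (le_INR (x - p) (x' - p) ltac:(lia)). lra.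
Qed.

(* Log-concavity: coef_sq (k+m) coef_sq (k-m) <= coef_sq k ^ 2, obtained by
   comparing the m successive ratios above k - m and above k. *)
Lemma coef_sq_logconcave k : (p + m <= k)%nat ->
  coef_sq (k + m) * coef_sq (k - m) <= coef_sq k * coef_sq k.
Proof.
  intros Hk.
  assert (Step : forall t, (t <= m)%nat -> coef_sq (k + t) * coef_sq (k - m) <= coef_sq k * coef_sq (k - m + t)).
  { induction t as [|t IH]; intros Ht.
    - rewrite !Nat.add_0_r. lra.
    - replace (k + S t)%nat with (S (k + t)) by lia.
      replace (k - m + S t)%nat with (S (k - m + t)) by lia.
      rewrite !coef_sq_succ by lia.
      pose proof (IH ltac:(lia)). pose proof (coef_ratio_antitone (k - m + t) (k + t) ltac:(lia) ltac:(lia)).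
      pose proof (coef_sq_pos (k + t)). pose proof (coef_sq_pos (k - m)).
      pose proof (coef_sq_pos k). pose proof (coef_sq_pos (k - m + t)).
      pose proof (coef_ratio_nonneg (k + t)). pose proof (coef_ratio_nonneg (k - m + t)).
      assert (coef_ratio (k + t) * (coef_sq (k + t) * coef_sq (k - m))
              <= coef_ratio (k + t) * (coef_sq k * coef_sq (k - m + t))) by (apply Rmult_le_compat_l; auto).
      assert (coef_ratio (k + t) * (coef_sq k * coef_sq (k - m + t))
              <= coef_ratio (k - m + t) * (coef_sq k * coef_sq (k - m + t))) by (apply Rmult_le_compat_r; nra).
      nra. }
  specialize (Step m (le_n _)). replace (k - m + m)%nat with k in Step by lia. exact Step.
Qed.

Lemma up_coef_logconcave k : (p + m <= k)%nat ->
  up_coef p m (k + m) * up_coef p m (k - m) <= up_coef p m k * up_coef p m k.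
Proof.
  intros Hk. pose proof (up_coef_nonneg (k + m)). pose proof (up_coef_nonneg (k - m)).
  pose proof (up_coef_nonneg k). pose proof (coef_sq_logconcave k Hk).
  rewrite <- !up_coef_sq in H2.
  assert (0 <= up_coef p m (k + m) * up_coef p m (k - m)) by nra. nra.
Qed.

End Coefficients.

(** ** Summability of the inverse coefficients *)

Definition inv_pow32 (n : nat) : R := / ((INR n + 1) * sqrt (INR n + 1)).

Lemma inv_pow32_pos n : 0 < inv_pow32 n.
Proof.
  unfold inv_pow32. pose proof (pos_INR n). destruct (sqrt_ge_1 (INR n + 1)); [lra|].
  apply Rinv_0_lt_compat. nra.
Qed.

(* With a = sqrt n, b = sqrt (n+1): b^(-3) <= 2/a - 2/b = 2/(ab(a+b)). *)
Lemma inv_cube_telescope a b : 0 < a <= b -> b * b - a * a = 1 -> / (b * b * b) <= 2 / a - 2 / b.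
Proof.
  intros Hab Hd.
  replace (2 / a - 2 / b) with (2 / (a * b * (a + b))).
  - apply Rmult_le_reg_r with (b * b * b * (a * b * (a + b))); [apply Rmult_lt_0_compat; nra|].
    replace (/ (b * b * b) * (b * b * b * (a * b * (a + b)))) with (a * b * (a + b)) by (field; nra).
    replace (2 / (a * b * (a + b)) * (b * b * b * (a * b * (a + b)))) with (2 * (b * b * b)) by (field; nra).
    nra.
  - field_simplify_eq; nra.
Qed.

Lemma inv_pow32_partial n : sum_f_R0 inv_pow32 n <= 3 - 2 / sqrt (INR n + 1).
Proof.
  induction n as [|n IH].
  - simpl. unfold inv_pow32. simpl. replace (0 + 1) with 1 by ring. rewrite sqrt_1. lra.
  - change (sum_f_R0 inv_pow32 (S n)) with (sum_f_R0 inv_pow32 n + inv_pow32 (S n)).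
    unfold inv_pow32 at 2. rewrite S_INR. pose proof (pos_INR n).
    destruct (sqrt_ge_1 (INR n + 1)) as [Ha1 Ha2]; [lra|].
    destruct (sqrt_ge_1 (INR n + 1 + 1)) as [Hb1 Hb2]; [lra|].
    rewrite <- Hb2 at 1.
    pose proof (inv_cube_telescope (sqrt (INR n + 1)) (sqrt (INR n + 1 + 1))).
    assert (sqrt (INR n + 1) <= sqrt (INR n + 1 + 1)) by (apply sqrt_le_1_alt; lra).
    lra.
Qed.

Lemma inv_pow32_summable : exists l, infinite_sum inv_pow32 l.
Proof.
  apply (infinite_sum_bounded inv_pow32 3); [intro; left; apply inv_pow32_pos|].
  intro n. pose proof (inv_pow32_partial n). pose proof (pos_INR n).
  destruct (sqrt_ge_1 (INR n + 1)); [lra|].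
  assert (0 < 2 / sqrt (INR n + 1)) by (apply Rdiv_lt_0_compat; lra). lra.
Qed.

Section InverseCoefficients.
Variables p m : nat.
Hypothesis h3 : (3 <= 2 * p + m)%nat.

(* 1 / up_coef (k - c) = O(k^(-3/2)), with explicit constant (p + c + 1)^(3/2) *)
Definition shift_const (c : nat) : R := (INR (p + c) + 1) * sqrt (INR (p + c) + 1).

Lemma shift_const_pos c : 0 < shift_const c.
Proof.
  unfold shift_const. pose proof (pos_INR (p + c)). destruct (sqrt_ge_1 (INR (p + c) + 1)); [lra|]. nra.
Qed.

(* Since k + 1 <= (k - p - c + 1)(p + c + 1), cubing and using up_coef^2 >= (k-c-p+1)^3
   gives ((k+1)^(3/2))^2 <= (up_coef (k-c) (p+c+1)^(3/2))^2. *)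
Lemma inv_up_coef_bound c k : (p + c <= k)%nat ->
  / up_coef p m (k - c) <= shift_const c * inv_pow32 k.
Proof.
  intros Hk. pose proof (coef_sq_cubic p m (k - c) h3 ltac:(lia)) as L.
  rewrite <- up_coef_sq in L. pose proof (up_coef_ge_1 p m (k - c) h3 ltac:(lia)) as U1.
  replace (k - c - p)%nat with (k - (p + c))%nat in L by lia.
  assert (EA : INR k + 1 = (INR (k - (p + c)) + 1) + INR (p + c))
    by (rewrite <- (Nat.sub_add (p + c) k Hk) at 1; rewrite plus_INR; ring).
  pose proof (pos_INR k). pose proof (pos_INR (k - (p + c))). pose proof (pos_INR (p + c)).
  destruct (sqrt_ge_1 (INR k + 1)) as [Hk1 Hk2]; [lra|].
  destruct (sqrt_ge_1 (INR (p + c) + 1)) as [Hq1 Hq2]; [lra|].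
  unfold shift_const, inv_pow32.
  set (B := INR (k - (p + c)) + 1) in *. set (q := INR (p + c) + 1) in *.
  set (u := up_coef p m (k - c)) in *.
  set (sk := sqrt (INR k + 1)) in *. set (sq := sqrt q) in *.
  assert (HB : 1 <= B) by (unfold B; lra). assert (Hq : 1 <= q) by (unfold q; lra).
  assert (Hk1' : INR k + 1 <= B * q).
  { assert (0 <= (B - 1) * (q - 1)) by (apply Rmult_le_pos; lra). unfold q in *. lra. }
  assert (Cube : (INR k + 1) * sk * ((INR k + 1) * sk) <= (u * (q * sq)) * (u * (q * sq))).
  { replace ((INR k + 1) * sk * ((INR k + 1) * sk)) with ((INR k + 1) * ((INR k + 1) * (INR k + 1)))
      by (rewrite <- Hk2; ring).
    replace (u * (q * sq) * (u * (q * sq))) with ((u * u) * (q * (q * q))) by (rewrite <- Hq2; ring).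
    assert ((INR k + 1) * ((INR k + 1) * (INR k + 1)) <= (B * q) * ((B * q) * (B * q))).
    { assert ((INR k + 1) * (INR k + 1) <= (B * q) * (B * q)) by nra. nra. }
    assert (0 < q * (q * q)) by nra.
    assert (B * (B * B) * (q * (q * q)) <= (u * u) * (q * (q * q))) by (apply Rmult_le_compat_r; lra).
    nra. }
  assert (Lin : (INR k + 1) * sk <= u * (q * sq)).
  { apply Rsqr_incr_0_var; [exact Cube|]. apply Rmult_le_pos; [lra|]. apply Rmult_le_pos; lra. }
  assert (0 < u * ((INR k + 1) * sk)) by (apply Rmult_lt_0_compat; [lra|apply Rmult_lt_0_compat; lra]).
  apply Rmult_le_reg_r with (u * ((INR k + 1) * sk)); [assumption|].
  replace (/ u * (u * ((INR k + 1) * sk))) with ((INR k + 1) * sk) by (field; lra).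
  replace (q * sq * / ((INR k + 1) * sk) * (u * ((INR k + 1) * sk))) with (u * (q * sq)) by (field; lra).
  exact Lin.
Qed.

End InverseCoefficients.

(** ** Formal eigenvectors of H for the eigenvalues +-i *)

Lemma Cnorm2_sub_scale_le a b d : 0 <= d ->
  Cnorm2 (Csub a (Cscale d b)) <= (1 + d) * Cnorm2 a + (d * d + d) * Cnorm2 b.
Proof.
  intros Hd. unfold Cnorm2, Csub, Cscale; simpl.
  assert (0 <= d * ((re a + re b) * (re a + re b) + (im a + im b) * (im a + im b)))
    by (apply Rmult_le_pos; [lra|apply Rplus_le_le_0_compat; apply Rle_0_sqr]).
  nra.
Qed.

(* The real core of the energy estimate: if u^2 W <= (1+d) Y + (d^2+d) Z and
   u' d <= u^2 (log-concavity), then u' W <= (1 + 1/d + 2/u) max(u Y, d Z). *)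
Lemma energy_step_real u u' d W Y Z : 1 <= u -> 1 <= d -> 0 <= u' -> u' * d <= u * u ->
  0 <= W -> 0 <= Y -> 0 <= Z ->
  u * u * W <= (1 + d) * Y + (d * d + d) * Z ->
  u' * W <= (1 + (/ d + 2 / u)) * Rmax (u * Y) (d * Z).
Proof.
  intros Hu Hd Hu' Hlc HW HY HZ Hrec.
  set (M := Rmax (u * Y) (d * Z)).
  assert (M1 : u * Y <= M) by apply Rmax_l. assert (M2 : d * Z <= M) by apply Rmax_r.
  assert (Hinv : 0 < / d <= 1) by (split; [apply Rinv_0_lt_compat; lra|rewrite <- Rinv_1; apply Rinv_le_contravar; lra]).
  assert (S1 : u' * W <= (1 + / d) * Y + (1 + / d) * (d * Z)).
  { apply Rmult_le_reg_r with (d * (u * u)); [nra|].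
    replace (((1 + / d) * Y + (1 + / d) * (d * Z)) * (d * (u * u)))
      with (u * u * ((1 + d) * Y + (d * d + d) * Z)) by (field; lra).
    assert (u' * d * (u * u * W) <= u * u * (u * u * W)) by (apply Rmult_le_compat_r; nra).
    assert (u * u * (u * u * W) <= u * u * ((1 + d) * Y + (d * d + d) * Z)) by (apply Rmult_le_compat_l; nra).
    nra. }
  assert (T1 : (1 + / d) * Y <= 2 / u * M).
  { replace (2 / u * M) with (2 * (/ u * M)) by (field; lra).
    assert (Y <= / u * M).
    { apply Rmult_le_reg_l with u; [lra|]. rewrite <- Rmult_assoc, Rinv_r, Rmult_1_l by lra. lra. }
    nra. }
  assert (T2 : (1 + / d) * (d * Z) <= (1 + / d) * M) by (apply Rmult_le_compat_l; lra).
  lra.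
Qed.

Lemma exp_le_mono x y : x <= y -> exp x <= exp y.
Proof. intros [Hlt| ->]; [left; apply exp_increasing; auto|lra]. Qed.

Lemma Cnorm2_scale r z : Cnorm2 (Cscale r z) = r * r * Cnorm2 z.
Proof. unfold Cnorm2, Cscale; simpl; ring. Qed.

Section Eigenvectors.
Variables (p m : nat) (s : R).

Definition lam : Defs.C := mkC 0 s.

(* formal solutions in B_p of H y = lam y, with no summability required *)
Definition eigvec (y : vec) : Prop :=
  (forall k, (k < p)%nat -> y k = C0) /\ (forall k, Happly p m y k = Cmul lam (y k)).

Lemma eigvec_row y : eigvec y -> forall j, (p <= j)%nat ->
  Cscale (up_coef p m j) (y (j + m)%nat)
  = Csub (Cmul lam (y j)) (Cscale (jac_lo p m j) (y (j - m)%nat)).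
Proof.
  intros [_ Hy] j Hj. specialize (Hy j).
  rewrite Happly_jacobi, jac_high in Hy by lia. rewrite <- Hy.
  apply Ceq; unfold Cadd, Csub, Cscale; simpl; ring.
Qed.

Lemma eigvec_add y y' : eigvec y -> eigvec y' -> eigvec (fun k => Cadd (y k) (y' k)).
Proof.
  intros [Zy Hy] [Zy' Hy']. split.
  - intros k Hk. rewrite Zy, Zy' by auto. apply Ceq; simpl; ring.
  - intro k. rewrite Happly_add, Hy, Hy'. apply Ceq; unfold Cadd, Cmul; simpl; ring.
Qed.

Lemma eigvec_mul c y : eigvec y -> eigvec (fun k => Cmul c (y k)).
Proof.
  intros [Zy Hy]. split.
  - intros k Hk. rewrite Zy by auto. apply Ceq; simpl; ring.
  - intro k. rewrite Happly_mul, Hy. apply Ceq; unfold Cmul; simpl; ring.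
Qed.

Lemma eigvec_zero : eigvec (fun _ => C0).
Proof.
  split; [reflexivity|]. intro k. rewrite Happly_jacobi. apply Ceq; unfold Cadd, Cscale, Cmul; simpl; ring.
Qed.

Lemma eigvec_combination (c : nat -> Defs.C) (f : nat -> vec) n :
  (forall i, (i < n)%nat -> eigvec (f i)) -> eigvec (fun k => Csum (fun i => Cmul (c i) (f i k)) n).
Proof.
  induction n as [|n IH]; intros Hf; simpl; [apply eigvec_zero|].
  apply eigvec_add; [apply IH; auto|apply eigvec_mul, Hf; lia].
Qed.

Hypothesis hm : (1 <= m)%nat.
Hypothesis h3 : (3 <= 2 * p + m)%nat.

Lemma eigvec_unique y y' : eigvec y -> eigvec y' ->
  (forall j, (j < m)%nat -> y (p + j)%nat = y' (p + j)%nat) -> forall k, y k = y' k.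
Proof.
  intros Hy Hy' Init k. induction k as [k IH] using (well_founded_induction lt_wf).
  destruct (Nat.ltb_spec k p). { rewrite (proj1 Hy), (proj1 Hy'); auto. }
  destruct (Nat.ltb_spec k (p + m)). { replace k with (p + (k - p))%nat by lia. apply Init; lia. }
  set (j := (k - m)%nat).
  pose proof (eigvec_row y Hy j ltac:(unfold j; lia)) as R.
  pose proof (eigvec_row y' Hy' j ltac:(unfold j; lia)) as R'.
  replace (j + m)%nat with k in R, R' by (unfold j; lia).
  rewrite (IH j), (IH (j - m)%nat) in R by (unfold j; lia). rewrite <- R' in R.
  pose proof (up_coef_ge_1 p m j h3 ltac:(unfold j; lia)).
  apply (f_equal re) in R as Rr. apply (f_equal im) in R as Ri. simpl in Rr, Ri.
  apply Ceq; apply Rmult_eq_reg_l with (up_coef p m j); lra.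
Qed.

(* The eigenvector with initial coefficients e_i, computed by the recurrence
   y_{j+m} = (lam y_j - jac_lo j y_{j-m}) / up_coef j with enough fuel [n]. *)
Fixpoint eig_fuel (i n k : nat) : Defs.C :=
  match n with
  | O => C0
  | S n' =>
    if Nat.ltb k p then C0
    else if Nat.ltb k (p + m) then (if Nat.eqb k (p + i) then mkC 1 0 else C0)
    else Cscale (/ up_coef p m (k - m))
           (Csub (Cmul lam (eig_fuel i n' (k - m)))
                 (Cscale (jac_lo p m (k - m)) (eig_fuel i n' (k - m - m))))
  end.

Definition eig_basis (i : nat) : vec := fun k => eig_fuel i (S k) k.

Lemma eig_fuel_enough i n k : (k < n)%nat -> eig_fuel i n k = eig_basis i k.
Proof.
  revert k. induction n as [n IH] using (well_founded_induction lt_wf). intros k Hk.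
  destruct n as [|n']; [lia|]. unfold eig_basis. simpl.
  destruct (Nat.ltb_spec k p); [reflexivity|]. destruct (Nat.ltb_spec k (p + m)); [reflexivity|].
  destruct k as [|k']; [lia|].
  rewrite (IH n' ltac:(lia) (S k' - m)%nat), (IH n' ltac:(lia) (S k' - m - m)%nat) by lia.
  rewrite (IH (S k') ltac:(lia) (S k' - m)%nat), (IH (S k') ltac:(lia) (S k' - m - m)%nat) by lia.
  reflexivity.
Qed.

Lemma eig_basis_unfold i k : eig_basis i k =
  if Nat.ltb k p then C0
  else if Nat.ltb k (p + m) then (if Nat.eqb k (p + i) then mkC 1 0 else C0)
  else Cscale (/ up_coef p m (k - m))
         (Csub (Cmul lam (eig_basis i (k - m)%nat))
               (Cscale (jac_lo p m (k - m)) (eig_basis i (k - m - m)%nat))).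
Proof.
  unfold eig_basis at 1. simpl.
  destruct (Nat.ltb_spec k p); [reflexivity|]. destruct (Nat.ltb_spec k (p + m)); [reflexivity|].
  rewrite !eig_fuel_enough by lia. reflexivity.
Qed.

Lemma eig_basis_init i j : (j < m)%nat -> eig_basis i (p + j)%nat = if Nat.eqb j i then mkC 1 0 else C0.
Proof.
  intros Hj. rewrite eig_basis_unfold.
  destruct (Nat.ltb_spec (p + j) p); [lia|]. destruct (Nat.ltb_spec (p + j) (p + m)); [|lia].
  destruct (Nat.eqb_spec (p + j) (p + i)); destruct (Nat.eqb_spec j i); auto; lia.
Qed.

Lemma eig_basis_eigvec i : eigvec (eig_basis i).
Proof.
  split.
  - intros k Hk. rewrite eig_basis_unfold. destruct (Nat.ltb_spec k p); [reflexivity|lia].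
  - intro k. destruct (Nat.ltb_spec k p).
    + rewrite Happly_low, eig_basis_unfold by auto. destruct (Nat.ltb_spec k p); [|lia].
      apply Ceq; simpl; ring.
    + rewrite Happly_jacobi, jac_high, (eig_basis_unfold i (k + m)) by auto.
      destruct (Nat.ltb_spec (k + m) p); [lia|]. destruct (Nat.ltb_spec (k + m) (p + m)); [lia|].
      replace (k + m - m)%nat with k by lia.
      pose proof (up_coef_ge_1 p m k h3 H).
      apply Ceq; unfold Cadd, Cscale, Csub, Cmul; simpl; field; lra.
Qed.

Lemma eig_basis_combination_init (c : nat -> Defs.C) j n : (j < m)%nat ->
  Csum (fun i => Cmul (c i) (eig_basis i (p + j)%nat)) n = if Nat.ltb j n then c j else C0.
Proof.
  intros Hj. induction n as [|n IH]; simpl; auto. rewrite IH, eig_basis_init by auto.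
  destruct (Nat.eqb_spec j n); destruct (Nat.ltb_spec j n); destruct (Nat.ltb_spec j (S n));
  try lia; try subst; apply Ceq; unfold Cadd, Cmul; simpl; ring.
Qed.

Hypothesis hs : s * s = 1.

Lemma Cnorm2_lam z : Cnorm2 (Cmul lam z) = Cnorm2 z.
Proof.
  unfold Cnorm2, Cmul, lam; simpl.
  transitivity ((s * s) * (re z * re z + im z * im z)); [ring|rewrite hs; ring].
Qed.

Section Energy.
Variable y : vec.
Hypothesis Hy : eigvec y.

Definition energy (k : nat) : R := up_coef p m k * Cnorm2 (y k).

(* the relative growth allowed for the energy at step k *)
Definition growth (k : nat) : R :=
  if Nat.leb (p + m + m) k then / up_coef p m (k - m - m) + 2 / up_coef p m (k - m) else 0.

Lemma energy_nonneg k : 0 <= energy k.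
Proof. apply Rmult_le_pos; [apply up_coef_nonneg|apply Cnorm2_nonneg]. Qed.

Lemma growth_nonneg k : 0 <= growth k.
Proof.
  unfold growth. destruct (Nat.leb_spec (p + m + m) k); [|lra].
  pose proof (up_coef_ge_1 p m (k - m - m) h3 ltac:(lia)).
  pose proof (up_coef_ge_1 p m (k - m) h3 ltac:(lia)).
  assert (0 < / up_coef p m (k - m - m)) by (apply Rinv_0_lt_compat; lra).
  assert (0 < 2 / up_coef p m (k - m)) by (apply Rdiv_lt_0_compat; lra). lra.
Qed.

Lemma energy_step k : (p + m + m <= k)%nat ->
  energy k <= (1 + growth k) * Rmax (energy (k - m)) (energy (k - m - m)).
Proof.
  intros Hk. set (j := (k - m)%nat).
  assert (Hrow := eigvec_row y Hy j ltac:(unfold j; lia)).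
  replace (j + m)%nat with k in Hrow by (unfold j; lia).
  rewrite jac_lo_high in Hrow by (unfold j; lia).
  apply (f_equal Cnorm2) in Hrow. rewrite Cnorm2_scale in Hrow.
  pose proof (Cnorm2_sub_scale_le (Cmul lam (y j)) (y (j - m)%nat) (up_coef p m (j - m))
                (up_coef_nonneg p m (j - m))) as Hsub.
  rewrite Cnorm2_lam, <- Hrow in Hsub.
  unfold energy, growth. destruct (Nat.leb_spec (p + m + m) k); [|lia].
  replace (k - m - m)%nat with (j - m)%nat by (unfold j; lia). fold j.
  apply energy_step_real; auto using Cnorm2_nonneg, up_coef_nonneg.
  - apply up_coef_ge_1; auto. unfold j; lia.
  - apply up_coef_ge_1; auto. unfold j; lia.
  - replace k with (j + m)%nat by (unfold j; lia). apply up_coef_logconcave. unfold j; lia.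
Qed.

(* growth k = O(k^(-3/2)), so the total growth is finite *)
Lemma growth_bounded : exists E, forall n, sum_f_R0 growth n <= E.
Proof.
  destruct inv_pow32_summable as [L HL].
  set (c := shift_const p (m + m) + 2 * shift_const p m).
  destruct (infinite_sum_le growth (fun n => c * inv_pow32 n) (c * L)) as [E [HE _]].
  - intro n. split; [apply growth_nonneg|]. unfold growth, c.
    pose proof (inv_pow32_pos n). pose proof (shift_const_pos p (m + m)). pose proof (shift_const_pos p m).
    destruct (Nat.leb_spec (p + m + m) n); [|nra].
    pose proof (inv_up_coef_bound p m h3 (m + m) n ltac:(lia)).
    pose proof (inv_up_coef_bound p m h3 m n ltac:(lia)).
    replace (n - m - m)%nat with (n - (m + m))%nat by lia. unfold Rdiv. nra.
  - apply infinite_sum_scal; auto.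
  - exists E. intro n. apply partial_sum_le_sum; auto. apply growth_nonneg.
Qed.

(* Discrete Gronwall: energy k <= C exp (growth 0 + ... + growth k). *)
Lemma energy_bounded : exists K, forall k, energy k <= K.
Proof.
  destruct growth_bounded as [E HE].
  set (C := sum_f_R0 energy (p + m + m)).
  assert (HC : 0 <= C) by (apply cond_pos_sum; apply energy_nonneg).
  assert (Gronwall : forall k, energy k <= C * exp (sum_f_R0 growth k)).
  { intro k. induction k as [k IH] using (well_founded_induction lt_wf).
    destruct (Nat.leb_spec k (p + m + m)).
    - pose proof (exp_ineq1_le (sum_f_R0 growth k)). pose proof (cond_pos_sum growth k growth_nonneg).
      apply Rle_trans with C; [apply term_le_partial_sum; auto using energy_nonneg|].
      assert (C * 1 <= C * exp (sum_f_R0 growth k)) by (apply Rmult_le_compat_l; lra). lra.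
    - destruct k as [|k']; [lia|].
      assert (Hprev : forall i, (i <= k')%nat -> energy i <= C * exp (sum_f_R0 growth k')).
      { intros i Hi. eapply Rle_trans; [apply IH; lia|]. apply Rmult_le_compat_l; auto.
        apply exp_le_mono, partial_sum_mono; auto using growth_nonneg. }
      change (sum_f_R0 growth (S k')) with (sum_f_R0 growth k' + growth (S k')).
      rewrite exp_plus.
      pose proof (exp_ineq1_le (growth (S k'))). pose proof (growth_nonneg (S k')).
      pose proof (exp_pos (sum_f_R0 growth k')).
      eapply Rle_trans; [apply energy_step; lia|].
      assert (Rmax (energy (S k' - m)) (energy (S k' - m - m)) <= C * exp (sum_f_R0 growth k'))
        by (apply Rmax_lub; apply Hprev; lia).
      assert (0 <= Rmax (energy (S k' - m)) (energy (S k' - m - m)))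
        by (eapply Rle_trans; [apply energy_nonneg|apply Rmax_l]).
      apply Rle_trans with (exp (growth (S k')) * (C * exp (sum_f_R0 growth k'))); [|lra].
      apply Rmult_le_compat; lra. }
  exists (C * exp E). intro k. eapply Rle_trans; [apply Gronwall|].
  apply Rmult_le_compat_l; auto. apply exp_le_mono, HE.
Qed.

(* Hence |y_k|^2 <= K / up_coef k = O(k^(-3/2)) is summable. *)
Lemma eigvec_l2 : l2 y.
Proof.
  destruct energy_bounded as [K HK].
  assert (K0 : 0 <= K) by (eapply Rle_trans; [apply (energy_nonneg 0)|apply HK]).
  destruct inv_pow32_summable as [L HL].
  destruct (infinite_sum_le (fun k => Cnorm2 (y k)) (fun k => (K * shift_const p 0) * inv_pow32 k)
              ((K * shift_const p 0) * L)) as [S [HS _]].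
  - intro k. split; [apply Cnorm2_nonneg|].
    pose proof (inv_pow32_pos k). pose proof (shift_const_pos p 0).
    destruct (Nat.ltb_spec k p) as [Hlow|Hhigh].
    + rewrite (proj1 Hy k Hlow). unfold Cnorm2; simpl.
      replace (0 * 0 + 0 * 0) with 0 by ring. apply Rmult_le_pos; [apply Rmult_le_pos|]; lra.
    + pose proof (inv_up_coef_bound p m h3 0 k ltac:(lia)) as Hinv. rewrite Nat.sub_0_r in Hinv.
      pose proof (up_coef_ge_1 p m k h3 Hhigh). pose proof (HK k) as Hk. unfold energy in Hk.
      assert (Cnorm2 (y k) <= K * / up_coef p m k).
      { apply Rmult_le_reg_l with (up_coef p m k); [lra|].
        replace (up_coef p m k * (K * / up_coef p m k)) with K by (field; lra). lra. }
      assert (K * / up_coef p m k <= K * (shift_const p 0 * inv_pow32 k)) by (apply Rmult_le_compat_l; auto).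
      lra.
  - apply infinite_sum_scal; auto.
  - exists S; auto.
Qed.

End Energy.

(* Square summable formal eigenvectors are deficiency vectors: <H x, y> = <x, lam y>
   holds on polynomials by finite symmetry and passes to the closure. *)
Lemma eigvec_deficient y : eigvec y -> deficiency_space p m s y.
Proof.
  intros Hy. assert (Ly : l2 y) by (apply eigvec_l2; auto).
  split; [split; [exact Ly|apply Hy]|].
  intros x w [Lx [Lw [xs [Pxs [Cx Cw]]]]].
  apply (inner_limit_eq (fun n => Happly p m (xs n)) w (fun _ => y) y xs x
     (fun _ k => Cmul lam (y k)) (fun k => Cmul lam (y k)));
    auto using l2conv_const; try apply Lx; try apply Lw.
  - destruct Ly as [A HA]. exists A. eapply infinite_sum_ext; [|exact HA].
    intro k. symmetry. apply Cnorm2_lam.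
  - intros b n. destruct (Pxs n) as [_ [N HN]].
    destruct (Happly_symmetric p m b (xs n) y N HN) as [S [H1 H2]]. exists S. split; auto.
    eapply infinite_sum_ext; [|exact H2]. intro k. simpl. rewrite (proj2 Hy). reflexivity.
Qed.

(* Conversely, testing a deficiency vector y against e_k (k >= p) gives (H y)_k = lam y_k. *)
Lemma deficient_eigvec y : deficiency_space p m s y -> eigvec y.
Proof.
  intros [[Ly Zy] D]. split; [exact Zy|]. intro k.
  destruct (Nat.ltb_spec k p) as [Hlow|Hhigh].
  { rewrite Happly_low, Zy by auto. apply Ceq; simpl; ring. }
  assert (Hek : forall j, (S k <= j)%nat -> unit_vec k j = C0)
    by (intros j Hj; unfold unit_vec; destruct (Nat.eqb_spec j k); [lia|reflexivity]).
  assert (Pek : polyBp p (unit_vec k)).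
  { split; [|exists (S k); exact Hek].
    intros j Hj. unfold unit_vec. destruct (Nat.eqb_spec j k); [lia|reflexivity]. }
  assert (Graph : Hmin p m (unit_vec k) (Happly p m (unit_vec k))).
  { split; [|split].
    - split; [exact (l2_finite _ _ Hek)|apply Pek].
    - split; [|intros j Hj; apply Happly_low; auto].
      apply (l2_finite _ (S k + m)). intros j Hj. rewrite Happly_jacobi, !Hek by lia.
      apply Ceq; simpl; ring.
    - exists (fun _ => unit_vec k). split; [auto|split; apply l2conv_const]. }
  destruct (D _ _ Graph) as [z [[Hz1 Hz2] [Hz3 Hz4]]].
  assert (Part : forall b, inner_part b (mkC 1 0) (Happly p m y k) = inner_part b (mkC 1 0) (Cmul lam (y k))).
  { intro b. destruct (Happly_symmetric p m b (unit_vec k) y (S k) Hek) as [S [S1 S2]].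
    rewrite (uniqueness_sum _ _ _ (inner_unit_vec b k (Happly p m y)) S2).
    pose proof (inner_unit_vec b k (fun j => Cmul lam (y j))) as Hlam.
    destruct b.
    - rewrite (uniqueness_sum _ _ _ Hlam Hz3). exact (uniqueness_sum _ _ _ S1 Hz1).
    - rewrite (uniqueness_sum _ _ _ Hlam Hz4). exact (uniqueness_sum _ _ _ S1 Hz2). }
  pose proof (Part true) as Pr. pose proof (Part false) as Pi.
  destruct (Happly p m y k) as [hr hi]. unfold inner_part, Cmul, Cconj in Pr, Pi; simpl in Pr, Pi.
  apply Ceq; simpl; lra.
Qed.

Theorem deficiency_dim : has_dim (deficiency_space p m s) m.
Proof.
  exists eig_basis. split; [|split].
  - intros i _. apply eigvec_deficient, eig_basis_eigvec.
  - intros c H i Hi. specialize (H (p + i)%nat).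
    rewrite eig_basis_combination_init in H by auto. destruct (Nat.ltb_spec i m); [auto|lia].
  - intros y Hy. exists (fun i => y (p + i)%nat). intro k.
    apply (eigvec_unique y (fun k => Csum (fun i => Cmul (y (p + i)%nat) (eig_basis i k)) m));
      auto using deficient_eigvec.
    + apply eigvec_combination. intros; apply eig_basis_eigvec.
    + intros j Hj. rewrite eig_basis_combination_init by auto. destruct (Nat.ltb_spec j m); [auto|lia].
Qed.

End Eigenvectors.

Theorem theorem2p3 (p m : nat) (hm : (1 <= m)%nat) (hpm : INR p + INR m / 2 > 1) :
  (* Hmin is (the graph of) an operator *)
  (forall x y y', Hmin p m x y -> Hmin p m x y' -> forall k, y k = y' k) /\
  (* closed *)
  (forall (xs ys : nat -> vec) x y,
      (forall n, Hmin p m (xs n) (ys n)) -> l2conv xs x -> l2conv ys y ->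
      Hmin p m x y) /\
  (* symmetric *)
  (forall x y x' y', Hmin p m x y -> Hmin p m x' y' ->
      exists z, has_inner y x' z /\ has_inner x y' z) /\
  (* deficiency numbers n_+ = n_- = m *)
  has_dim (deficiency_space p m 1) m /\
  has_dim (deficiency_space p m (-1)) m.
Proof.
  assert (h3 : (3 <= 2 * p + m)%nat).
  { apply Nat.nlt_ge. intro Hlt. assert (Hle : (2 * p + m <= 2)%nat) by lia.
    apply le_INR in Hle. rewrite plus_INR, mult_INR in Hle. simpl in Hle. lra. }
  split; [|split; [|split; [|split]]].
  - intros x y y' H H' k. rewrite (Hmin_Happly p m x y H k), (Hmin_Happly p m x y' H' k). reflexivity.
  - apply Hmin_closed.
  - apply Hmin_symmetric.
  - apply deficiency_dim; auto. ring.
  - apply deficiency_dim; auto. ring.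
Qed.
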